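(* In the setting described in the context, the function $\mathcal{W}$ is continuous on $\mathcal{K}(\mathbb{R}^n)$ with respect to the Hausdorff distance.
   Context: Let $\|\cdot\|$ be a norm on $\mathbb{R}^n$ and $\mathrm{dist}(x,\Omega):=\inf_{y\in\Omega}\|x-y\|$. Let $\mathcal{K}(\mathbb{R}^n)$ denote the nonempty compact subsets of $\mathbb{R}^n$, with Hausdorff distance $d_H(X,Y):=\max\{\sup_{x\in X}\mathrm{dist}(x,Y),\sup_{y\in Y}\mathrm{dist}(y,X)\}$. Consider $x_{k+1}=f(x_k,u_k)$ with $f:\mathbb{R}^n\times\mathbb{R}^m\to\mathbb{R}^n$ continuous and inputs $u_k\in U$, $U\subset\mathbb{R}^m$ nonempty compact. For $x\in\mathbb{R}^n$ and $\pi:\mathbb{Z}_+\to U$, $\varphi_x^\pi(0)=x$, $\varphi_x^\pi(k+1)=f(\varphi_x^\pi(k),\pi(k))$; $\mathcal{R}(X,k):=\{\varphi_x^\pi(k):x\in X,\pi\in U^{\mathbb{Z}_+}\}$. Let $\mathcal{A}\in\mathcal{K}(\mathbb{R}^n)$ be controlled invariant. Assume local $\ell_p$-stabilizability: there exist $r>0$, $M\ge1$, $p>0$, $\lambda:[0,r]\times\mathbb{Z}_+\to\mathbb{R}_+$ such that (1) for each $k$, $s\mapsto\lambda(s,k)$ is continuous, nondecreasing, $\lambda(0,k)=0$; for each $s$, $k\mapsto\lambda(s,k)$ is nonincreasing, $\lambda(s,0)\le s$; (2) $\sum_{k}\lambda(r,k)^p<\infty$; (3) for every $x$ with $\mathrm{dist}(x,\mathcal{A})\le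 r$ there is $\pi\in U^{\mathbb{Z}_+}$ with $\mathrm{dist}(\varphi_x^\pi(k),\mathcal{A})\le M\lambda(\mathrm{dist}(x,\mathcal{A}),k)$ for all $k$. Let $\alpha:\mathbb{R}^n\to\mathbb{R}_+$ be continuous with $\underline{\alpha}\,\mathrm{dist}(x,\mathcal{A})^{\bar p}\le\alpha(x)\le\overline{\alpha}\,\mathrm{dist}(x,\mathcal{A})^{\bar p}$, constants $\underline{\alpha},\overline{\alpha}>0$, $\bar p\ge p$. Define $\Psi(X):=\inf_{y\in X}\alpha(y)$, $\mathcal{V}(X):=\sum_{k=0}^\infty\Psi(\mathcal{R}(X,k))\in[0,\infty]$, and $\mathcal{W}(X):=1-\exp(-\mathcal{V}(X))$ with the convention $\exp(-\infty)=0$. *)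

From HB Require Import structures.
From mathcomp Require Import all_boot all_order all_algebra.
From mathcomp Require Import all_classical all_reals all_analysis.
Set Implicit Arguments. Unset Strict Implicit. Unset Printing Implicit Defensive.
Import Order.TTheory GRing.Theory Num.Theory.
Import numFieldNormedType.Exports.
Local Open Scope classical_set_scope.
Local Open Scope ring_scope.

Section Defs.
Variables (R : realType) (n m : nat).

Definition is_norm (N : 'rV[R]_n -> R) : Prop :=
  [/\ (forall x, N x = 0 -> x = 0),
      (forall (a : R) x, N (a *: x) = `|a| * N x) &
      (forall x y, N (x + y) <= N x + N y)].

Definition dist (N : 'rV[R]_n -> R) (x : 'rV[R]_n) (Om : set 'rV[R]_n) : R :=
  inf [set N (x - y) | y in Om].

Definition dH (N : 'rV[R]_n -> R) (X Y : set 'rV[R]_n) : R :=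
  Num.max (sup [set dist N x Y | x in X]) (sup [set dist N y X | y in Y]).

Definition is_K (X : set 'rV[R]_n) : Prop := compact X /\ X !=set0.

Fixpoint traj (f : 'rV[R]_n * 'rV[R]_m -> 'rV[R]_n) (x : 'rV[R]_n)
  (pi : nat -> 'rV[R]_m) (k : nat) : 'rV[R]_n :=
  match k with
  | 0 => x
  | k'.+1 => f (traj f x pi k', pi k')
  end.

Definition admissible (U : set 'rV[R]_m) (pi : nat -> 'rV[R]_m) : Prop :=
  forall k, U (pi k).

Definition Reach (f : 'rV[R]_n * 'rV[R]_m -> 'rV[R]_n) (U : set 'rV[R]_m)
  (X : set 'rV[R]_n) (k : nat) : set 'rV[R]_n :=
  [set z | exists x pi, [/\ X x, admissible U pi & z = traj f x pi k]].

Definition controlled_invariant (f : 'rV[R]_n * 'rV[R]_m -> 'rV[R]_n)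
  (U : set 'rV[R]_m) (A : set 'rV[R]_n) : Prop :=
  forall x, A x -> exists u, U u /\ A (f (x, u)).

Definition Psi (alpha : 'rV[R]_n -> R) (X : set 'rV[R]_n) : R :=
  inf [set alpha y | y in X].

Definition Vfun f U (alpha : 'rV[R]_n -> R) (X : set 'rV[R]_n) : \bar R :=
  (\sum_(0 <= k <oo) (Psi alpha (Reach f U X k))%:E)%E.

(* W = 1 - exp(-V), with exp(-oo) = 0 *)
Definition Wfun f U (alpha : 'rV[R]_n -> R) (X : set 'rV[R]_n) : R :=
  match Vfun f U alpha X with
  | EFin v => 1 - expR (- v)
  | _ => 1
  end.

Definition local_lp_stabilizable f U (N : 'rV[R]_n -> R) (A : set 'rV[R]_n)
  (r M p : R) (lambda : R -> nat -> R) : Prop :=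
  0 < r /\ 1 <= M /\ 0 < p /\
      (forall s k, 0 <= s <= r -> 0 <= lambda s k) /\
      (forall k, {within `[0, r], continuous (fun s => lambda s k)}) /\
      (forall k s1 s2, 0 <= s1 -> s1 <= s2 -> s2 <= r ->
           lambda s1 k <= lambda s2 k) /\
      (forall k, lambda 0 k = 0) /\
      (forall s k1 k2, 0 <= s <= r -> (k1 <= k2)%N ->
           lambda s k2 <= lambda s k1) /\
      (forall s, 0 <= s <= r -> lambda s 0 <= s) /\
      (\sum_(0 <= k <oo) ((lambda r k) `^ p)%:E < +oo)%E /\
      (forall x, dist N x A <= r ->
         exists pi, admissible U pi /\
           forall k, dist N (traj f x pi k) A <= M * lambda (dist N x A) k).

End Defs.

From HB Require Import structures.
From mathcomp Require Import all_boot all_order all_algebra.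
From mathcomp Require Import all_classical all_reals all_analysis.
From mathcomp Require Import lra.
Import Order.TTheory GRing.Theory Num.Theory.
Import numFieldNormedType.Exports.
Local Open Scope classical_set_scope.
Local Open Scope ring_scope.
Set Implicit Arguments.
Unset Strict Implicit.

(** Write [Psi_k(X)] for the infimum of [alpha] on the [k]-step reachable set of [X], so that
    [V(X) = sum_k Psi_k(X)].  Each [Psi_k] is continuous for the Hausdorff distance, because
    [f] and [alpha] are uniformly continuous near compact sets; hence [V], a supremum of
    continuous partial sums, is lower semicontinuous.  For upper semicontinuity at [X] with
    [V(X)] finite, some term [Psi_k(X)] is small, so a trajectory from [X] reaches a point
    where [alpha] is small, i.e. close to [A].  A trajectory with the same inputs from a nearby
    point of [Y] does too, and from there stabilizability bounds the whole tail of the series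
    for [Y] by a multiple of [sum_j lambda(s, j)^pbar], which is small for small [s]; the
    finitely many remaining terms are continuous.  Finally [W = 1 - exp(-V)] is a continuous
    increasing function of [V] on [[0, +oo]]. *)

Section NormEquivalence.
Variables (R : realType) (n : nat) (N : 'rV[R]_n -> R).
Hypothesis hN : is_norm N.

Lemma is_norm0 : N 0 = 0.
Proof. by case: hN => _ hZ _; rewrite -(scale0r 0) hZ normr0 mul0r. Qed.

Lemma is_normN x : N (- x) = N x.
Proof. by case: hN => _ hZ _; rewrite -scaleN1r hZ normrN normr1 mul1r. Qed.

Lemma is_norm_distC x y : N (x - y) = N (y - x).
Proof. by rewrite -is_normN opprB. Qed.

Lemma is_norm_triangle x y : N (x + y) <= N x + N y.
Proof. by case: hN. Qed.

Lemma is_norm_ge0 x : 0 <= N x.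
Proof.
have := is_norm_triangle x (- x); rewrite subrr is_norm0 is_normN; lra.
Qed.

Lemma is_norm_ub : exists2 C, 0 < C & forall x, N x <= C * `|x|.
Proof.
case: hN => _ hZ _.
have sum_ge0 : 0 <= \sum_(j < n) N 'e_j by apply: sumr_ge0 => j _; exact: is_norm_ge0.
exists (1 + \sum_(j < n) N 'e_j) => [|x]; first lra.
rewrite {1}(row_sum_delta x).
apply: (@le_trans _ _ (\sum_(j < n) `|x| * N 'e_j)).
  apply: (big_ind2 (fun a b => N a <= b)); first by rewrite is_norm0.
    by move=> a1 b1 a2 b2 h1 h2; apply: le_trans (is_norm_triangle _ _) _; exact: lerD.
  move=> j _; rewrite hZ ler_wpM2r ?is_norm_ge0 //.
  by rewrite [leRHS]/Num.Def.normr /= mx_normrE; apply/bigmax_geP; right; exists (ord0, j).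
by rewrite -mulr_sumr mulrC ler_wpM2r // lerDr.
Qed.

Lemma is_norm_continuous : continuous N.
Proof.
have [C C0 hC] := is_norm_ub.
move=> x; apply/(@cvgrPdist_lt _ _ _ (nbhs x)) => e e0; near=> y.
have : `|N x - N y| <= N (x - y).
  rewrite ler_norml; have := is_norm_triangle (x - y) y; have := is_norm_triangle (y - x) x.
  rewrite !subrK is_norm_distC; lra.
suff : C * `|x - y| < e by have := hC (x - y); lra.
rewrite -ltr_pdivlMl //; near: y.
by apply: cvgr_dist_lt; [exact: cvg_id | rewrite mulr_gt0 ?invr_gt0].
Unshelve. all: by end_near. Qed.

Lemma is_norm_lb : exists2 c, 0 < c & forall x, c * `|x| <= N x.
Proof.
(* [c] is the minimum of [N] on the unit sphere of the sup norm, empty only when [n = 0]. *)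
pose S := [set x : 'rV[R]_n | `|x| = 1].
have [[u Su]|S0] := pselect (S !=set0); last first.
  exists 1 => // x; have [->|x0] := eqVneq x 0; first by rewrite normr0 mulr0 is_norm_ge0.
  exfalso; apply: S0; exists (`|x|^-1 *: x).
  by rewrite /S /= normrZ normrV ?unitfE ?normr_eq0 // normr_id mulVf ?normr_eq0.
have cS : compact S.
  apply: bounded_closed_compact.
    by exists 1; split => // M M1 x /= ->; exact: ltW.
  have -> : S = Num.norm @^-1` [set 1] by [].
  by apply: ((continuous_closedP _).1 (@norm_continuous _ _)); exact: closed_eq.
have [c /set_mem Sc cmin] :=
  compact_EVT_min (ex_intro _ u Su) cS (continuous_subspaceT is_norm_continuous).
exists (N c) => [|x].
  rewrite lt_neqAle is_norm_ge0 andbT eq_sym; apply/negP => /eqP Nc0.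
  case: hN => /(_ _ Nc0) c0 _ _; move: Sc.
  by rewrite /S /= c0 normr0 => /eqP; rewrite eq_sym oner_eq0.
have [->|x0] := eqVneq x 0; first by rewrite normr0 mulr0 is_norm_ge0.
have nx0 : 0 < `|x| by rewrite normr_gt0.
have := cmin (`|x|^-1 *: x); rewrite inE /S /= normrZ normrV ?unitfE ?gt_eqF //.
rewrite normr_id mulVf ?gt_eqF // => /(_ erefl).
by case: hN => _ -> _; rewrite normrV ?unitfE ?gt_eqF // normr_id ler_pdivlMl // mulrC.
Qed.

Lemma Nball_sub_ball e : 0 < e ->
  exists2 d, 0 < d & forall x y, N (y - x) < d -> ball x e y.
Proof.
move=> e0; have [c c0 hc] := is_norm_lb; exists (c * e) => [|x y]; first exact: mulr_gt0.
move=> hxy; rewrite -ball_normE /= -normrN opprB -(ltr_pM2l c0).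
exact: le_lt_trans (hc _) hxy.
Qed.

Lemma ball_sub_Nball e : 0 < e ->
  exists2 d, 0 < d & forall x y, ball x d y -> N (y - x) < e.
Proof.
move=> e0; have [C C0 hC] := is_norm_ub; exists (e / C) => [|x y]; first exact: divr_gt0.
rewrite -ball_normE /= -normrN opprB => hxy.
by apply: le_lt_trans (hC _) _; rewrite mulrC -ltr_pdivlMr.
Qed.

End NormEquivalence.

Section InfOfImage.
Variables (R : realType) (T : Type) (g : T -> R).

Lemma inf_image_lt (Z : set T) t : Z !=set0 -> inf [set g y | y in Z] < t ->
  exists2 z, Z z & g z < t.
Proof.
by move=> [z Zz] /inf_lt[|_ [y Zy <-] gy]; [exists (g z), z | exists y].
Qed.

Hypothesis g_ge0 : forall y, 0 <= g y.

Lemma inf_image_ge0 (Z : set T) : 0 <= inf [set g y | y in Z].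
Proof.
have [[z Zz]|Z0] := pselect (Z !=set0).
  by apply: lb_le_inf => [|_ [y _ <-]]; [exists (g z), z | exact: g_ge0].
rewrite (_ : Z = set0) ?image_set0 ?inf0 //.
by apply/seteqP; split => // z Zz; apply: Z0; exists z.
Qed.

Lemma inf_image_le (Z : set T) z : Z z -> inf [set g y | y in Z] <= g z.
Proof. by move=> Zz; apply: ge_inf; [exists 0 => _ [y _ <-] | exists z]. Qed.

End InfOfImage.

Section Hausdorff.
Variables (R : realType) (n : nat) (N : 'rV[R]_n -> R).
Hypothesis hN : is_norm N.

Definition in_fattening (d : R) (Y X : set 'rV[R]_n) :=
  forall y, Y y -> exists2 x, X x & N (y - x) < d.

Lemma dist_ge0 x (A : set 'rV[R]_n) : 0 <= dist N x A.
Proof. by apply: inf_image_ge0 => y; exact: is_norm_ge0. Qed.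

Lemma dist_le_sup X Y y : compact Y -> X !=set0 -> Y y ->
  dist N y X <= sup [set dist N y' X | y' in Y].
Proof.
move=> cY [x0 Xx0] Yy; have [C C0 hC] := is_norm_ub hN.
have [B [_ hB]] := compact_bounded cY.
have {}hB : forall y', Y y' -> `|y'| <= B + 1 by apply: hB; rewrite ltrDl.
apply: ub_le_sup; last by exists y.
exists (C * (B + 1) + N x0) => _ [y' Yy' <-].
apply: le_trans (inf_image_le (fun=> is_norm_ge0 hN _) Xx0) _.
apply: le_trans (is_norm_triangle hN _ _) _; rewrite is_normN //.
by rewrite lerD2r; apply: le_trans (hC _) _; rewrite ler_pM2l ?hB.
Qed.

Lemma dH_fattening X Y d : is_K X -> is_K Y -> dH N X Y < d ->
  in_fattening d Y X /\ in_fattening d X Y.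
Proof.
move=> [cX X0] [cY Y0]; rewrite /dH gt_max => /andP[hXY hYX].
split=> [y Yy|x Xx]; apply: inf_image_lt => //.
  by apply: le_lt_trans hYX; exact: dist_le_sup.
by apply: le_lt_trans hXY; exact: dist_le_sup.
Qed.

Definition hausdorff_nbhs (X : set 'rV[R]_n) : set_system (set 'rV[R]_n) :=
  filter_from [set d : R | 0 < d] (fun d => [set Y | is_K Y /\ dH N X Y < d]).

#[global] Instance hausdorff_nbhs_filter X : Filter (hausdorff_nbhs X).
Proof.
apply: filter_from_filter; first by exists 1%R => /=.
move=> d1 d2 d10 d20; exists (Num.min d1 d2); first by rewrite /= lt_min d10 d20.
by move=> Y [KY]; rewrite lt_min => /andP[h1 h2]; split.
Qed.

Lemma near_hausdorff_fattening X d : is_K X -> 0 < d ->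
  \forall Y \near hausdorff_nbhs X, is_K Y /\ in_fattening d Y X.
Proof. by move=> KX d0; exists d => // Y [KY /(dH_fattening KX KY)[]]. Qed.

Lemma near_hausdorff_meets X x (Q : set 'rV[R]_n) : is_K X -> X x -> nbhs x Q ->
  \forall Y \near hausdorff_nbhs X, exists2 y, Y y & Q y.
Proof.
move=> KX Xx /nbhs_ballP[e e0 /= eQ]; have [d d0 hd] := Nball_sub_ball hN e0.
exists d => // Y [KY /(dH_fattening KX KY)[_ /(_ x Xx)[y Yy xy]]].
by exists y => //; apply/eQ/hd; rewrite is_norm_distC.
Qed.

End Hausdorff.

Lemma compact_uniform_continuity (R : realType) (T V : pseudoMetricType R)
    (K : set T) (g : T -> V) :
  compact K -> continuous g -> forall e, 0 < e ->
  exists2 d, 0 < d & forall z z', K z -> ball z d z' -> ball (g z) e (g z').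
Proof.
move=> /compact_near_coveringP cK gc e e0.
have near_d : \forall d \near 0^'+,
    K `<=` [set z | forall z', ball z d z' -> ball (g z) e (g z')].
  apply: cK => z0 _.
  have /nbhs_ballP[r r0 hr] : nbhs z0 (g @^-1` ball (g z0) (e / 2)).
    by apply: gc; apply: nbhsx_ballx; rewrite divr_gt0.
  have r20 : 0 < r / 2 by rewrite divr_gt0.
  exists (ball z0 (r / 2), [set d | d < r / 2]) => [|[z d] /= [z0z dr] z' zz'].
    by split; [exact: nbhsx_ballx | exact: nbhs_right_lt].
  have z0z' : ball z0 r z' by apply: (le_ball _ (ball_triangle z0z zz')); lra.
  by apply: ball_splitr; apply: hr; [apply: (le_ball _ z0z); lra | exact: z0z'].
have [d [d0 hd]] := @filter_ex _ (0 : R)^'+ _ _ (filterI (nbhs_right_gt 0) near_d).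
by exists d => // z z' /hd; apply.
Qed.

Section NearSums.
Variables (R : realType) (T : Type) (F : set_system T).
Context {FF : Filter F}.

Lemma near_sum_gt (g : nat -> T -> R) (c : nat -> R) :
  (forall k e, 0 < e -> \forall t \near F, c k - e < g k t) ->
  forall K e, 0 < e -> \forall t \near F, \sum_(k < K) c k - e < \sum_(k < K) g k t.
Proof.
move=> hg; elim=> [|K IH] e e0.
  by apply: nearW => t; rewrite !big_ord0 subr_lt0.
have e2 : 0 < e / 2 by rewrite divr_gt0.
apply: filterS2 (IH _ e2) (hg K _ e2) => t h1 h2; rewrite !big_ord_recr /=; lra.
Qed.

Lemma near_sum_lt (g : nat -> T -> R) (c : nat -> R) :
  (forall k e, 0 < e -> \forall t \near F, g k t < c k + e) ->
  forall K e, 0 < e -> \forall t \near F, \sum_(k < K) g k t < \sum_(k < K) c k + e.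
Proof.
move=> hg K e e0.
have hNg k e' : 0 < e' -> \forall t \near F, - c k - e' < - g k t.
  by move=> e'0; apply: filterS (hg k _ e'0) => t; lra.
apply: filterS (near_sum_gt (g := fun k t => - g k t) hNg K e0) => t.
by rewrite !sumrN; lra.
Qed.

End NearSums.

Section Reachable.
Variables (R : realType) (n m : nat).
Variables (f : 'rV[R]_n * 'rV[R]_m -> 'rV[R]_n) (U : set 'rV[R]_m).

Definition cat_input (k : nat) (pi pi' : nat -> 'rV[R]_m) (i : nat) :=
  if (i < k)%N then pi i else pi' (i - k)%N.

Lemma eq_traj x pi pi' k : (forall j, (j < k)%N -> pi j = pi' j) ->
  traj f x pi k = traj f x pi' k.
Proof. by elim: k => //= k IH h; rewrite IH ?h // => j /ltnW; exact: h. Qed.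

Lemma traj_cat x pi pi' k j :
  traj f x (cat_input k pi pi') (k + j) = traj f (traj f x pi k) pi' j.
Proof.
elim: j => [|j /= IH]; last by rewrite addnS /= IH /cat_input ltnNge leq_addr addKn.
by rewrite addn0; apply: eq_traj => i ik; rewrite /cat_input ik.
Qed.

Lemma admissible_cat k pi pi' : admissible U pi -> admissible U pi' ->
  admissible U (cat_input k pi pi').
Proof. by move=> h h' i; rewrite /cat_input; case: ifP. Qed.

Lemma Reach_traj X x pi k : X x -> admissible U pi -> Reach f U X k (traj f x pi k).
Proof. by move=> Xx hpi; exists x, pi. Qed.

Lemma Reach_cat X k z pi' j : Reach f U X k z -> admissible U pi' ->
  Reach f U X (k + j) (traj f z pi' j).
Proof.
move=> [x [pi [Xx hpi ->]]] hpi'; rewrite -traj_cat.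
by apply: Reach_traj => //; exact: admissible_cat.
Qed.

Lemma ReachS X k : Reach f U X k.+1 = [set f zu | zu in Reach f U X k `*` U].
Proof.
apply/seteqP; split=> [_ [x [pi [Xx hpi ->]]]|_ [[w u] [/= Rw Uu] <-]].
  by exists (traj f x pi k, pi k) => //; split; [exact: Reach_traj | exact: hpi].
by rewrite -addn1; apply: (Reach_cat (pi' := fun=> u)).
Qed.

Hypothesis U0 : U !=set0.

Lemma Reach0 X : Reach f U X 0 = X.
Proof.
have [u Uu] := U0; apply/seteqP; split=> [_ [x [pi [Xx _ ->]]] //|x Xx].
by apply: (Reach_traj (pi := fun=> u)).
Qed.

Lemma Reach_neq0 X k : X !=set0 -> Reach f U X k !=set0.
Proof.
by have [u Uu] := U0; move=> [x Xx]; exists (traj f x (fun=> u) k); exact: Reach_traj.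
Qed.

Hypothesis f_cont : continuous f.

Lemma traj_continuous pi k : continuous (fun y => traj f y pi k).
Proof.
elim: k => [|k IH] y /=; first exact: cvg_id.
apply: (@continuous_comp _ _ _ (fun y => (traj f y pi k, pi k)) f); last exact: f_cont.
exact: cvg_pair (IH y) (cvg_cst (pi k)).
Qed.

Hypothesis U_compact : compact U.

Lemma Reach_compact X k : compact X -> compact (Reach f U X k).
Proof.
move=> cX; elim: k => [|k IH]; first by rewrite Reach0.
rewrite ReachS; apply: continuous_compact; last exact: compact_setX.
exact: continuous_subspaceT.
Qed.

End Reachable.
Arguments traj_continuous {R n m f} f_cont pi k.

Section NonnegSeries.
Variables (R : realType) (u : nat -> R).
Hypothesis u_ge0 : forall k, (0 <= u k)%R.
Local Open Scope ereal_scope.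

Lemma nneseries_partial_le K :
  (\sum_(k < K) u k)%R%:E <= \sum_(0 <= k <oo) (u k)%:E.
Proof.
rewrite -sumEFin -(big_mkord xpredT (fun k => (u k)%:E)).
by apply: nneseries_lim_ge => k _ _; rewrite lee_fin.
Qed.

Lemma nneseries_gt_partial t : t%:E < \sum_(0 <= k <oo) (u k)%:E ->
  exists K, (t < \sum_(k < K) u k)%R.
Proof.
move=> ht; apply: contrapT => /forallNP hK; move: ht; apply/negP; rewrite -leNgt.
apply: lime_le; first by apply: is_cvg_nneseries => k _ _; rewrite lee_fin.
apply: nearW => K; rewrite sumEFin big_mkord lee_fin leNgt; apply/negP; exact: hK.
Qed.

Lemma nneseries_term_lt th : \sum_(0 <= k <oo) (u k)%:E < +oo -> (0 < th)%R ->
  exists k, (u k < th)%R.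
Proof.
move=> fin th0; have u_cvg0 := cvg_series_cvg_0 (nnseries_is_cvg u_ge0 fin).
by have [k hk] := filter_ex (cvgr_lt _ u_cvg0 _ th0); exists k.
Qed.

End NonnegSeries.

Section InfimumOfCost.
Variables (R : realType) (n : nat) (N : 'rV[R]_n -> R) (alpha : 'rV[R]_n -> R).
Hypotheses (hN : is_norm N) (alpha_ge0 : forall x, 0 <= alpha x).

Lemma Psi_ge0 Z : 0 <= Psi alpha Z.
Proof. exact: inf_image_ge0. Qed.

Lemma Psi_le Z z : Z z -> Psi alpha Z <= alpha z.
Proof. exact: inf_image_le. Qed.

Hypothesis alpha_cont : continuous alpha.

Lemma Psi_fattening_lower Z e : compact Z -> 0 < e -> exists2 d, 0 < d &
  forall Z', Z' !=set0 -> in_fattening N d Z' Z -> Psi alpha Z - e < Psi alpha Z'.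
Proof.
move=> cZ e0; have e2 : 0 < e / 2 by rewrite divr_gt0.
have [d1 d10 hd1] := compact_uniform_continuity cZ alpha_cont e2.
have [d d0 hd] := Nball_sub_ball hN d10.
exists d => // Z' [z0 Zz0] hZ'.
suff : Psi alpha Z - e / 2 <= Psi alpha Z' by lra.
apply: lb_le_inf => [|_ [z' Zz' <-]]; first by exists (alpha z0), z0.
have [z Zz zz'] := hZ' z' Zz'.
have := hd1 z z' Zz (hd _ _ zz'); rewrite -ball_normE /= => h.
have := Psi_le Zz; have := ler_norm (alpha z - alpha z'); lra.
Qed.

End InfimumOfCost.

Section CostSemicontinuity.
Variables (R : realType) (n m : nat) (N : 'rV[R]_n -> R).
Variables (f : 'rV[R]_n * 'rV[R]_m -> 'rV[R]_n) (U : set 'rV[R]_m).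
Variable alpha : 'rV[R]_n -> R.
Hypotheses (hN : is_norm N) (f_cont : continuous f) (U_compact : compact U).
Hypotheses (U0 : U !=set0) (alpha_ge0 : forall x, 0 <= alpha x) (alpha_cont : continuous alpha).

Lemma Reach_fattening X : compact X -> forall k e, 0 < e -> exists2 d, 0 < d &
  forall Y, in_fattening N d Y X -> in_fattening N e (Reach f U Y k) (Reach f U X k).
Proof.
move=> cX; elim=> [|k IH] e e0; first by exists e => // Y; rewrite !Reach0.
have [d1 d10 hd1] := ball_sub_Nball hN e0.
have [d2 d20 hd2] := compact_uniform_continuity
  (compact_setX (Reach_compact U0 f_cont U_compact (k := k) cX) U_compact) f_cont d10.
have [d3 d30 hd3] := Nball_sub_ball hN d20.
have [d d0 hd] := IH _ d30.
exists d => // Y /hd hY; rewrite !ReachS => _ [[w' u] [/= Rw' Uu] <-].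
have [w Rw ww'] := hY w' Rw'.
exists (f (w, u)); first by exists (w, u).
by apply: hd1; apply: (hd2 (w, u)) => //; split; [exact: hd3 | exact: ballxx].
Qed.

Lemma Psi_Reach_lower X k e : is_K X -> 0 < e ->
  \forall Y \near hausdorff_nbhs N X,
    Psi alpha (Reach f U X k) - e < Psi alpha (Reach f U Y k).
Proof.
move=> KX e0; have cRX := Reach_compact U0 f_cont U_compact (k := k) KX.1.
have [d1 d10 hd1] := Psi_fattening_lower hN alpha_ge0 alpha_cont cRX e0.
have [d d0 hd] := Reach_fattening KX.1 k d10.
apply: filterS (near_hausdorff_fattening hN KX d0) => Y [[_ Y0] hY].
by apply: hd1; [exact: Reach_neq0 | exact: hd].
Qed.

Lemma Psi_Reach_upper X k e : is_K X -> 0 < e ->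
  \forall Y \near hausdorff_nbhs N X,
    Psi alpha (Reach f U Y k) < Psi alpha (Reach f U X k) + e.
Proof.
move=> KX e0.
have : Psi alpha (Reach f U X k) < Psi alpha (Reach f U X k) + e by rewrite ltrDl.
move=> /(inf_image_lt (Reach_neq0 f U0 k KX.2))[_ [x [pi [Xx hpi ->]]] hx].
have alpha_traj_lt : \forall y \near x, alpha (traj f y pi k) < Psi alpha (Reach f U X k) + e.
  exact: cvgr_lt (continuous_comp (traj_continuous f_cont pi k x) (@alpha_cont _)) _ hx.
apply: filterS (near_hausdorff_meets hN KX Xx alpha_traj_lt) => Y [y Yy hy].
exact: le_lt_trans (Psi_le alpha_ge0 (Reach_traj f k Yy hpi)) hy.
Qed.

Lemma Vfun_lower X t : is_K X -> (t%:E < Vfun f U alpha X)%E ->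
  \forall Y \near hausdorff_nbhs N X, (t%:E < Vfun f U alpha Y)%E.
Proof.
have Psi_Reach_ge0 Y k : 0 <= Psi alpha (Reach f U Y k) by exact: Psi_ge0.
move=> KX /(nneseries_gt_partial (Psi_Reach_ge0 X))[K]; rewrite -subr_gt0 => hK.
apply: filterS (near_sum_gt (fun k _ => Psi_Reach_lower k KX) K hK) => Y hY.
by apply: lt_le_trans (nneseries_partial_le (Psi_Reach_ge0 Y) K); rewrite lte_fin; lra.
Qed.

End CostSemicontinuity.

Lemma ge0_ger_powR (R : realType) (x a b : R) : 0 <= x <= 1 -> 0 < a <= b ->
  x `^ b <= x `^ a.
Proof.
move=> /andP[x0 x1] /andP[a0 ab]; have [->|xn0] := eqVneq x 0.
  by rewrite !powR0 ?gt_eqF //; exact: lt_le_trans ab.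
by apply: ger_powR => //; rewrite lt_neqAle eq_sym xn0 x0.
Qed.

Section DecayRate.
Variables (R : realType) (lambda : R -> nat -> R) (r p pbar : R).
Hypotheses (r_gt0 : 0 < r) (p_gt0 : 0 < p) (p_le : p <= pbar).
Hypothesis lambda_ge0 : forall s k, 0 <= s <= r -> 0 <= lambda s k.
Hypothesis lambda_mono : forall k s1 s2, 0 <= s1 -> s1 <= s2 -> s2 <= r ->
  lambda s1 k <= lambda s2 k.
Hypothesis lambda_anti : forall s k1 k2, 0 <= s <= r -> (k1 <= k2)%N ->
  lambda s k2 <= lambda s k1.
Hypothesis lambda_at0 : forall s, 0 <= s <= r -> lambda s 0 <= s.
Hypothesis lambda_summable : (\sum_(0 <= k <oo) ((lambda r k) `^ p)%:E < +oo)%E.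

Lemma lambda_series_small eta : 0 < eta -> exists s, [/\ 0 < s, s <= r &
  (\sum_(0 <= j <oo) ((lambda s j) `^ pbar)%:E <= eta%:E)%E].
Proof.
move=> eta0; have pbar0 : 0 < pbar by exact: lt_le_trans p_le.
pose u j := (lambda r j) `^ p; pose v s j := (lambda s j) `^ pbar.
have [J _ tail_small] : \forall J \near \oo, (\sum_(J <= j <oo) (u j)%:E < (eta / 2)%:E)%E.
  apply: nneseries_tail_cvg lambda_summable _ _ (open_ereal_lt' _) => [k _|].
    by rewrite lee_fin powR_ge0.
  by rewrite lte_fin divr_gt0.
(* The first [J] terms are at most [s ^ pbar <= a] because [lambda s j <= s]; the later ones
   are dominated by [lambda r j ^ p] because [lambda s j <= s <= 1] and [p <= pbar]. *)
pose a := eta / 2 / J.+1%:R.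
have a0 : 0 < a by rewrite !divr_gt0.
pose s := Num.min (Num.min r 1) (a `^ pbar^-1).
have s0 : 0 < s by rewrite !lt_min r_gt0 ltr01 powR_gt0.
have sr : 0 <= s <= r by rewrite ltW //= !ge_min lexx.
have s1 : s <= 1 by rewrite !ge_min lexx orbT.
have lambda_s j : 0 <= lambda s j <= s.
  by rewrite lambda_ge0 //= (le_trans (lambda_anti sr (leq0n j))) ?lambda_at0.
have v_le_a j : v s j <= a.
  apply: (@le_trans _ _ (s `^ pbar)).
    have /andP[ls0 lss] := lambda_s j.
    by apply: ge0_ler_powR => //; [exact: ltW | rewrite nnegrE ltW].
  apply: (@le_trans _ _ ((a `^ pbar^-1) `^ pbar)).
    apply: ge0_ler_powR; rewrite ?nnegrE ?powR_ge0 ?(ltW s0) ?(ltW pbar0) //.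
    by rewrite !ge_min lexx orbT.
  by rewrite -powRrM mulVf ?gt_eqF // powRr1 // ltW.
have v_le_u j : v s j <= u j.
  have /andP[ls0 lss] := lambda_s j.
  apply: (@le_trans _ _ ((lambda s j) `^ p)).
    by apply: ge0_ger_powR; rewrite ?p_gt0 ?p_le ?ls0 ?(le_trans lss s1).
  apply: ge0_ler_powR; rewrite ?nnegrE ?(ltW p_gt0) ?lambda_ge0 ?lexx ?(ltW r_gt0) //.
  by apply: lambda_mono; case/andP: sr.
exists s; split => //; first by case/andP: sr.
rewrite (@nneseries_split _ _ 0 J) => [|k _]; last by rewrite lee_fin powR_ge0.
rewrite add0n [eta]splitr EFinD; apply: leeD.
  rewrite sumEFin lee_fin (le_trans (ler_sum _ (fun j _ => v_le_a j))) //.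
  rewrite sumr_const_nat subn0 -[a *+ J]mulr_natr /a -mulrA ger_pMr ?divr_gt0 //.
  by rewrite mulrC ler_pdivrMr ?ltr0n // mul1r ler_nat.
apply: le_trans _ (ltW (tail_small J (leqnn J))).
by apply: lee_nneseries => [k _ _|k _]; rewrite lee_fin ?powR_ge0 ?v_le_u.
Qed.

End DecayRate.

Section ExpTransform.
Variable R : realType.

Definition Wmap (x : \bar R) : R := if x is r%:E then 1 - expR (- r) else 1.

Lemma WfunE n m (f : 'rV[R]_n * 'rV[R]_m -> 'rV[R]_n) U alpha X :
  Wfun f U alpha X = Wmap (Vfun f U alpha X).
Proof. by []. Qed.

Lemma Wmap_le1 x : Wmap x <= 1.
Proof. by case: x => //= r; rewrite lerBlDr lerDl expR_ge0. Qed.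

Lemma Wmap_gt t x : (t%:E < x)%E -> 1 - expR (- t) < Wmap x.
Proof.
case: x => [r||] //=; last by rewrite ltrBlDr ltrDl expR_gt0.
by rewrite lte_fin => tr; rewrite ltrD2l ltrN2 ltr_expR ltrN2.
Qed.

Lemma Wmap_le v x : (0 <= x)%E -> (x <= v%:E)%E -> Wmap x <= 1 - expR (- v).
Proof.
case: x => [r||] //= _; rewrite ?leey // lee_fin => rv.
by rewrite lerD2l lerN2 ler_expR lerN2.
Qed.

Lemma Wmap_approx x e : (0 <= x)%E -> 0 < e ->
  exists t, (t%:E < x)%E /\ Wmap x - e < 1 - expR (- t).
Proof.
move=> x0 e0; have e2 : 0 < e / 2 by rewrite divr_gt0.
case: x x0 => [r||] //= _.
  exists (- ln (expR (- r) + e / 2)).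
  rewrite lte_fin opprK lnK ?posrE ?addr_gt0 ?expR_gt0 //; split; last by lra.
  by rewrite ltrNl -ltr_expR lnK ?posrE ?addr_gt0 ?expR_gt0 // ltrDl.
exists (- ln (e / 2)); split; first exact: ltry.
by rewrite opprK lnK ?posrE //; lra.
Qed.

Lemma one_sub_expN_le (v h : R) : 0 <= v -> 0 <= h ->
  1 - expR (- (v + h)) <= 1 - expR (- v) + h.
Proof.
move=> v0 h0; rewrite opprD expRD.
have := expR_ge1Dx (- h); have : expR (- v) <= 1 by rewrite expR_le1 oppr_le0.
have := expR_gt0 (- v); nra.
Qed.

End ExpTransform.

Section Stabilizable.
Variables (R : realType) (n m : nat) (N : 'rV[R]_n -> R).
Variables (f : 'rV[R]_n * 'rV[R]_m -> 'rV[R]_n) (U : set 'rV[R]_m) (A : set 'rV[R]_n).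
Variables (alpha : 'rV[R]_n -> R) (alo ahi pbar r M : R) (lambda : R -> nat -> R).
Hypotheses (hN : is_norm N) (f_cont : continuous f) (U_compact : compact U).
Hypotheses (U0 : U !=set0) (alpha_cont : continuous alpha) (alo_gt0 : 0 < alo) (ahi_gt0 : 0 < ahi).
Hypothesis alpha_bounds : forall x,
  alo * (dist N x A) `^ pbar <= alpha x /\ alpha x <= ahi * (dist N x A) `^ pbar.
Hypotheses (M_gt0 : 0 < M) (pbar_gt0 : 0 < pbar).
Hypothesis lambda_ge0 : forall s k, 0 <= s <= r -> 0 <= lambda s k.
Hypothesis lambda_mono : forall k s1 s2, 0 <= s1 -> s1 <= s2 -> s2 <= r ->
  lambda s1 k <= lambda s2 k.
Hypothesis lambda_stab : forall x, dist N x A <= r -> exists pi, admissible U pi /\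
  forall k, dist N (traj f x pi k) A <= M * lambda (dist N x A) k.
Hypothesis lambda_small : forall eta, 0 < eta -> exists s, [/\ 0 < s, s <= r &
  (\sum_(0 <= j <oo) ((lambda s j) `^ pbar)%:E <= eta%:E)%E].

Lemma alpha_ge0 x : 0 <= alpha x.
Proof. by apply: le_trans (alpha_bounds x).1; rewrite mulr_ge0 ?powR_ge0 ?ltW. Qed.

Lemma dist_lt_of_alpha_lt z s : 0 < s -> alpha z < alo * s `^ pbar -> dist N z A < s.
Proof.
move=> s0; apply: contraTT; rewrite -!leNgt => sz.
apply: le_trans (alpha_bounds z).1; rewrite ler_pM2l //.
by apply: ge0_ler_powR; rewrite ?nnegrE ?(ltW pbar_gt0) ?(ltW s0) ?(dist_ge0 hN).
Qed.

Lemma Psi_Reach_tail Y k z s j : Reach f U Y k z -> dist N z A <= s -> s <= r ->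
  Psi alpha (Reach f U Y (k + j)) <= ahi * M `^ pbar * (lambda s j) `^ pbar.
Proof.
move=> Yz zs sr; have z0 := dist_ge0 hN z A.
have [pi [hpi pi_stab]] := lambda_stab (le_trans zs sr).
apply: le_trans (Psi_le alpha_ge0 (Reach_cat j Yz hpi)) _.
apply: le_trans (alpha_bounds _).2 _; rewrite -mulrA ler_pM2l //.
have ls0 : 0 <= lambda s j by apply: lambda_ge0; rewrite (le_trans z0 zs).
rewrite -powRM ?(ltW M_gt0) //; apply: ge0_ler_powR;
  rewrite ?nnegrE ?(ltW pbar_gt0) ?(dist_ge0 hN) ?mulr_ge0 ?(ltW M_gt0) //.
by apply: le_trans (pi_stab j) _; rewrite ler_pM2l // lambda_mono.
Qed.

Lemma Vfun_tail_le Y k z s : Reach f U Y k z -> dist N z A <= s -> s <= r ->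
  (\sum_(k <= i <oo) (Psi alpha (Reach f U Y i))%:E <=
   (ahi * M `^ pbar)%:E * \sum_(0 <= j <oo) ((lambda s j) `^ pbar)%:E)%E.
Proof.
move=> Yz zs sr; have Psi_Reach_ge0 i : 0 <= Psi alpha (Reach f U Y i).
  exact: Psi_ge0 alpha_ge0 _.
rewrite -nneseries_addn => [|i]; last by rewrite lee_fin.
rewrite -nneseriesZl => [|j _]; last by rewrite lee_fin powR_ge0.
apply: lee_nneseries => [i _ _|j _]; first by rewrite lee_fin.
by rewrite -EFinM lee_fin addnC; exact: Psi_Reach_tail Yz zs sr.
Qed.

Lemma Vfun_upper X v eta : is_K X -> Vfun f U alpha X = v%:E -> 0 < eta ->
  \forall Y \near hausdorff_nbhs N X, (Vfun f U alpha Y <= (v + eta)%:E)%E.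
Proof.
move=> KX VX eta0; have eta2 : 0 < eta / 2 by rewrite divr_gt0.
have Psi_Reach_ge0 Y k : 0 <= Psi alpha (Reach f U Y k) by exact: Psi_ge0 alpha_ge0 _.
have c0 : 0 < ahi * M `^ pbar by rewrite mulr_gt0 ?powR_gt0.
have [s [s0 sr lambda_s]] := lambda_small (divr_gt0 eta2 c0).
have th0 : 0 < alo * s `^ pbar by rewrite mulr_gt0 ?powR_gt0.
have VX_fin : (Vfun f U alpha X < +oo)%E by rewrite VX ltry.
have [k hk] := nneseries_term_lt (Psi_Reach_ge0 X) VX_fin th0.
have [_ [x [pi [Xx hpi ->]]] hx] := inf_image_lt (Reach_neq0 f U0 k KX.2) hk.
have alpha_traj_lt : \forall y \near x, alpha (traj f y pi k) < alo * s `^ pbar.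
  exact: cvgr_lt (continuous_comp (traj_continuous f_cont pi k x) (@alpha_cont _)) _ hx.
apply: filterS2 (near_hausdorff_meets hN KX Xx alpha_traj_lt)
  (near_sum_lt (fun i _ => Psi_Reach_upper hN f_cont U0 alpha_ge0 alpha_cont i KX) k eta2).
move=> Y [y Yy /dist_lt_of_alpha_lt-/(_ s0) ys] Y_head.
have X_head := nneseries_partial_le (Psi_Reach_ge0 X) k.
rewrite -/(Vfun f U alpha X) VX lee_fin in X_head.
rewrite /Vfun (@nneseries_split _ _ 0 k) => [|i _]; last by rewrite lee_fin.
rewrite add0n [eta]splitr addrA EFinD; apply: leeD.
  by rewrite sumEFin big_mkord lee_fin; lra.
apply: le_trans (Vfun_tail_le (Reach_traj f k Yy hpi) (ltW ys) sr) _.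
by rewrite -lee_pdivlMl // -EFinM mulrC.
Qed.

Lemma Wfun_lower X e : is_K X -> 0 < e ->
  \forall Y \near hausdorff_nbhs N X, Wfun f U alpha X - e < Wfun f U alpha Y.
Proof.
move=> KX e0; have V0 : (0 <= Vfun f U alpha X)%E.
  by apply: nneseries_ge0 => k _ _; rewrite lee_fin; exact: Psi_ge0 alpha_ge0 _.
have [t [tV Wt]] := Wmap_approx V0 e0.
apply: filterS (Vfun_lower hN f_cont U_compact U0 alpha_ge0 alpha_cont KX tV) => Y tVY.
by rewrite !WfunE; exact: lt_trans Wt (Wmap_gt tVY).
Qed.

Lemma Wfun_upper X e : is_K X -> 0 < e ->
  \forall Y \near hausdorff_nbhs N X, Wfun f U alpha Y < Wfun f U alpha X + e.
Proof.
move=> KX e0; have V0 Y : (0 <= Vfun f U alpha Y)%E.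
  by apply: nneseries_ge0 => k _ _; rewrite lee_fin; exact: Psi_ge0 alpha_ge0 _.
have W1 Y : Wfun f U alpha Y <= 1 by rewrite WfunE Wmap_le1.
rewrite WfunE; case VX: (Vfun f U alpha X) (V0 X) => [v| |] // v0; last first.
  by apply: nearW => Y /=; have := W1 Y; lra.
have e2 : 0 < e / 2 by rewrite divr_gt0.
apply: filterS (Vfun_upper KX VX e2) => Y VY; rewrite WfunE.
apply: le_lt_trans (Wmap_le (V0 Y) VY) _.
rewrite lee_fin in v0; apply: le_lt_trans (one_sub_expN_le v0 (ltW e2)) _ => /=; lra.
Qed.

End Stabilizable.

Theorem corollary9 (R : realType) (n m : nat)
  (N : 'rV[R]_n -> R)
  (f : 'rV[R]_n * 'rV[R]_m -> 'rV[R]_n) (U : set 'rV[R]_m)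
  (A : set 'rV[R]_n)
  (r M p : R) (lambda : R -> nat -> R)
  (alpha : 'rV[R]_n -> R) (alo ahi pbar : R) :
  is_norm N ->
  continuous f ->
  compact U -> U !=set0 ->
  is_K A ->
  controlled_invariant f U A ->
  local_lp_stabilizable f U N A r M p lambda ->
  continuous alpha ->
  0 < alo -> 0 < ahi -> p <= pbar ->
  (forall x, alo * (dist N x A) `^ pbar <= alpha x /\
             alpha x <= ahi * (dist N x A) `^ pbar) ->
  forall X, is_K X ->
  forall eps, 0 < eps -> exists2 delta, 0 < delta &
    forall Y, is_K Y -> dH N X Y < delta ->
      `|Wfun f U alpha X - Wfun f U alpha Y| < eps.
Proof.
move=> hN f_cont U_compact U0 _ _ stab alpha_cont alo_gt0 ahi_gt0 p_le alpha_bounds X KX eps eps0.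
case: stab => r_gt0 [M_ge1 [p_gt0 [lambda_ge0 [_ [lambda_mono [_ [lambda_anti
  [lambda_at0 [lambda_summable lambda_stab]]]]]]]]].
have M_gt0 : 0 < M := lt_le_trans ltr01 M_ge1.
have pbar_gt0 : 0 < pbar := lt_le_trans p_gt0 p_le.
have lambda_small := lambda_series_small r_gt0 p_gt0 p_le lambda_ge0 lambda_mono
  lambda_anti lambda_at0 lambda_summable.
have [d d0 hd] : \forall Y \near hausdorff_nbhs N X,
    `|Wfun f U alpha X - Wfun f U alpha Y| < eps.
  apply: filterS2 (Wfun_lower hN f_cont U_compact U0 alpha_cont alo_gt0 alpha_bounds KX eps0)
    (Wfun_upper hN f_cont U0 alpha_cont alo_gt0 ahi_gt0 alpha_bounds M_gt0 pbar_gt0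
      lambda_ge0 lambda_mono lambda_stab lambda_small KX eps0) => Y.
  by rewrite ltr_norml; lra.
by exists d => // Y KY XY; apply: hd.
Qed.
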